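(* Let $n_1,n_2\ge1$, $n=n_1n_2$, and let $R=(r_{i,j})_{i,j=0}^{n-1}$ be a Hermitian positive definite block Toeplitz matrix with $n_2\times n_2$ blocks of size $n_1\times n_1$ (i.e. $R=(R_{b-a})_{a,b=0}^{n_2-1}$, $R_m\in\mathbb{C}^{n_1\times n_1}$, $R_{-m}=R_m^H$). There is an algorithm that evaluates the generalized reflection coefficient recurrences for $R$, computing $a_{k,l},a'_{k,l},p_{k,l},q_{k,l},v_{k,l},v'_{k,l}$ for all pairs $(k,l)$ with $0\le k\le n_1-1$ and $k\le l\le n-1$ (obtaining the quantities with $k\ge n_1$ that the recurrence needs through the identities $q_{k,l}=U^{k\,\mathrm{sec}\,n_1}q_{k\bmod n_1,\,l-k\,\mathrm{sec}\,n_1}$, $v_{k,l}=v_{k\bmod n_1,\,l-k\,\mathrm{sec}\,n_1}$), using $O(n_1^3n_2^2)$ arithmetic operations.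
   Context: For integers $a\ge0$, $b>0$: $a\bmod b$ is the remainder of division of $a$ by $b$ and $a\,\mathrm{sec}\,b:=b\lfloor a/b\rfloor$. $U$ is the $n\times n$ shift matrix with $U_{i+1,i}=1$ ($0\le i\le n-2$), zeros elsewhere, $U^0=I$. Let $e_0,\dots,e_{n-1}$ be the canonical basis column vectors of $\mathbb{C}^n$. Generalized reflection coefficients of $R$: $p_{k,k}=q_{k,k}=e_k$; $v_{k,l}:=q_{k,l}^TRe_l$, $v'_{k,l}:=p_{k,l}^TRe_k$ (positive reals); and for $0\le k<l\le n-1$, recursively in $l-k$: $a_{k,l}=\dfrac{p_{k,l-1}^TRe_l}{v_{k+1,l}}$, $a'_{k,l}=\dfrac{q_{k+1,l}^TRe_k}{v'_{k,l-1}}$, $p_{k,l}=p_{k,l-1}-a_{k,l}q_{k+1,l}$, $q_{k,l}=q_{k+1,l}-a'_{k,l}p_{k,l-1}$, $v_{k,l}=v_{k+1,l}(1-a_{k,l}a'_{k,l})$, $v'_{k,l}=v'_{k,l-1}(1-a_{k,l}a'_{k,l})$. The vector $p_{k,l}$ (resp. $q_{k,l}$) has nonzero entries only in positions $k,\dots,l$. *)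

From HB Require Import structures.
From mathcomp Require Import all_boot all_order all_algebra.
Set Implicit Arguments. Unset Strict Implicit. Unset Printing Implicit Defensive.
Import Order.TTheory GRing.Theory Num.Theory.
Local Open Scope ring_scope.

Section GRC.
Variable C : numClosedFieldType.
Variable n : nat.

(* canonical basis column vector e_i of C^n (zero vector if i >= n) *)
Definition ev (i : nat) : 'cV[C]_n := \col_(j < n) (j == i :> nat)%:R.

Definition bil (x : 'cV[C]_n) (R : 'M[C]_n) (y : 'cV[C]_n) : C :=
  (x^T *m R *m y) ord0 ord0.

Definition shiftU : 'M[C]_n := \matrix_(i < n, j < n) (i == j.+1 :> nat)%:R.

Definition is_hermitian (R : 'M[C]_n) : Prop := map_mx Num.conj R^T = R.
Definition is_posdef (R : 'M[C]_n) : Prop :=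
  forall x : 'cV[C]_n, x != 0 -> 0 < ((map_mx Num.conj x)^T *m R *m x) ord0 ord0.

Variable R : 'M[C]_n.

(* grc d k = (p_{k,k+d}, q_{k,k+d}, v_{k,k+d}, v'_{k,k+d}) *)
Fixpoint grc (d k : nat) : 'cV[C]_n * 'cV[C]_n * C * C :=
  match d with
  | 0 => (ev k, ev k, bil (ev k) R (ev k), bil (ev k) R (ev k))
  | d'.+1 =>
      let '(p1, _, _, v1') := grc d' k in        (* p_{k,l-1}, v'_{k,l-1} *)
      let '(_, q2, v2, _) := grc d' k.+1 in      (* q_{k+1,l}, v_{k+1,l} *)
      let l := k + d in
      let a := bil p1 R (ev l) / v2 in
      let a' := bil q2 R (ev k) / v1' in
      (p1 - a *: q2, q2 - a' *: p1, v2 * (1 - a * a'), v1' * (1 - a * a'))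
  end.

(* reflection coefficients (a_{k,k+d}, a'_{k,k+d}) for d >= 1 *)
Definition grca (d k : nat) : C * C :=
  match d with
  | 0 => (0, 0)
  | d'.+1 =>
      let '(p1, _, _, v1') := grc d' k in
      let '(_, q2, v2, _) := grc d' k.+1 in
      (bil p1 R (ev (k + d)) / v2, bil q2 R (ev k) / v1')
  end.

Definition gP k l := (grc (l - k) k).1.1.1.
Definition gQ k l := (grc (l - k) k).1.1.2.
Definition gV k l := (grc (l - k) k).1.2.
Definition gV' k l := (grc (l - k) k).2.
Definition gA k l := (grca (l - k) k).1.
Definition gA' k l := (grca (l - k) k).2.

End GRC.

Definition secn (a b : nat) : nat := b * (a %/ b).

(* R = (r_{i,j}) is block Toeplitz with n2 x n2 blocks of size n1 x n1:
   r_{i,j} depends only on (j div n1 - i div n1, i mod n1, j mod n1). *)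

Definition block_toeplitz (C : numClosedFieldType) (n1 n2 : nat)
  (R : 'M[C]_(n1 * n2)) : Prop :=
  forall i j i' j' : 'I_(n1 * n2),
    (i %% n1 = i' %% n1)%N -> (j %% n1 = j' %% n1)%N ->
    ((j %/ n1)%:Z - (i %/ n1)%:Z = (j' %/ n1)%:Z - (i' %/ n1)%:Z) ->
    R i j = R i' j'.

(* Algebraic (straight-line program) model of computation over C.
   Each instruction appends one value; operands refer to indices of
   previously computed values.  The cost of a program is its length. *)
Inductive instr (C : Type) : Type :=
| IIn of nat & nat          (* read input entry r_{i,j} *)
| ICst of C
| IAdd of nat & nat
| ISub of nat & nat
| IMul of nat & nat
| IDiv of nat & nat.

Section SLP.
Variable C : numClosedFieldType.

Definition step (inp : nat -> nat -> C) (vals : seq C) (ins : instr C) : seq C :=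
  rcons vals
    (match ins with
     | IIn i j => inp i j
     | ICst c => c
     | IAdd x y => nth 0 vals x + nth 0 vals y
     | ISub x y => nth 0 vals x - nth 0 vals y
     | IMul x y => nth 0 vals x * nth 0 vals y
     | IDiv x y => nth 0 vals x / nth 0 vals y
     end).

Definition run (inp : nat -> nat -> C) (P : seq (instr C)) : seq C :=
  foldl (step inp) [::] P.

Definition mx_input (n : nat) (R : 'M[C]_n) (i j : nat) : C :=
  match (insub i : option 'I_n), (insub j : option 'I_n) with
  | Some i', Some j' => R i' j'
  | _, _ => 0
  end.
End SLP.
Arguments block_toeplitz {C} n1 n2 R.

From HB Require Import structures.
From mathcomp Require Import all_boot all_order all_algebra zify ring.
Set Implicit Arguments. Unset Strict Implicit. Unset Printing Implicit Defensive.
Import Order.TTheory GRing.Theory Num.Theory.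
Local Open Scope ring_scope.

(* For a block Toeplitz R, shifting row and column indices by a multiple s of
   n1 does not change the entries of R, so the recurrence started at k is the
   recurrence started at k - s moved down by U^s: q_{k,l} = U^s q_{k-s,l-s}
   and v_{k,l} = v_{k-s,l-s}.  Hence only the rows 0 <= k < n1 have to be
   computed: the values q_{n1,l} and v_{n1,l} needed by row n1 - 1 are read
   off row 0.  Evaluating these n1 * n pairs (k, l) by increasing l - k, each
   pair costs two dot products and four vector operations of length n, so a
   straight-line program of length O(n1 n^2) = O(n1^3 n2^2) suffices. *)

Section Entries.
Variables (C : numClosedFieldType) (N : nat).
Implicit Types (x y : 'cV[C]_N) (R : 'M[C]_N).
Local Notation U := (shiftU C N).

Definition entry x (i : nat) : C := if insub i is Some i' then x i' 0 else 0.

Lemma entry_ord x (i : 'I_N) : entry x i = x i 0.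
Proof. by rewrite /entry valK. Qed.

Lemma entry_overflow x i : (N <= i)%N -> entry x i = 0.
Proof. by move=> hi; rewrite /entry insubF // ltnNge hi. Qed.

Lemma entry_subZ x y a i : entry (x - a *: y) i = entry x i - a * entry y i.
Proof. by rewrite /entry; case: insub => [i'|]; rewrite ?mxE ?mulr0 ?subr0. Qed.

Lemma entry_ev k i : (i < N)%N -> entry (ev C N k) i = (i == k)%:R.
Proof. by move=> hi; rewrite -[i]/(nat_of_ord (Ordinal hi)) entry_ord mxE. Qed.

Lemma entryP x y : (forall i, (i < N)%N -> entry x i = entry y i) -> x = y.
Proof.
move=> exy; apply/matrixP => i j; rewrite (ord1 j) -!entry_ord; exact: exy.
Qed.

Lemma entry_shiftU x i : (i < N)%N ->
  entry (U *m x) i = if i is i'.+1 then entry x i' else 0.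
Proof.
move=> hi; have -> : entry (U *m x) i = entry (U *m x) (Ordinal hi) by [].
rewrite entry_ord mxE /=; case: i hi => [|i] hi.
  by rewrite big1 // => j _; rewrite mxE mul0r.
have hi' : (i < N)%N by apply: ltnW.
rewrite (bigD1 (Ordinal hi')) //= big1 => [|j /eqP nj]; last first.
  rewrite mxE eqSS [_ == _](_ : _ = false) ?mul0r //.
  by apply/negbTE/eqP => e; apply: nj; apply: val_inj.
by rewrite mxE eqxx mul1r addr0 -(entry_ord x (Ordinal hi')).
Qed.

Lemma entry_shiftU_exp s x i : (i < N)%N ->
  entry (U ^+ s *m x) i = if (s <= i)%N then entry x (i - s) else 0.
Proof.
elim: s i => [|s IHs] i hi; first by rewrite expr0 mul1mx subn0.
rewrite exprS -mulmxE -mulmxA entry_shiftU //.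
by case: i hi => [|i] hi //; rewrite IHs ?ltnS ?subSS //; apply: ltnW.
Qed.

Lemma mx_input_ord R (i j : 'I_N) : mx_input R i j = R i j.
Proof. by rewrite /mx_input !valK. Qed.

Lemma bil_ev x R l : (l < N)%N ->
  bil x R (ev C N l) = \sum_(i < N) entry x i * mx_input R i l.
Proof.
move=> hl; rewrite /bil mxE (bigD1 (Ordinal hl)) //= big1 => [|j /eqP nj].
  rewrite !mxE eqxx mulr1 addr0; apply: eq_bigr => i _.
  by rewrite !mxE entry_ord -[l]/(nat_of_ord (Ordinal hl)) mx_input_ord.
rewrite !mxE [_ == _](_ : _ = false) ?mulr0 //.
by apply/negbTE/eqP => e; apply: nj; apply: val_inj.
Qed.

Lemma bil_ev_ev R k : (k < N)%N -> bil (ev C N k) R (ev C N k) = mx_input R k k.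
Proof.
move=> hk; rewrite bil_ev // (bigD1 (Ordinal hk)) //= big1 => [|j /eqP nj].
  by rewrite entry_ev // eqxx mul1r addr0.
rewrite entry_ev // [_ == _](_ : _ = false) ?mul0r //.
by apply/negbTE/eqP => e; apply: nj; apply: val_inj.
Qed.

Lemma grc_support R d k i : (k + d < i)%N ->
  entry (grc R d k).1.1.1 i = 0 /\ entry (grc R d k).1.1.2 i = 0.
Proof.
elim: d k => [|d IHd] k /= hi.
  case: (ltnP i N) => hiN; last by rewrite !entry_overflow.
  by rewrite entry_ev // [_ == _](_ : _ = false) //; apply/negbTE/eqP; lia.
have [p0 _] := IHd k ltac:(lia); have [_ q0] := IHd k.+1 ltac:(lia).
move: p0 q0; case: (grc R d k) => [[[p ?] ?] ?]; case: (grc R d k.+1) => [[[? q] ?] ?] /=.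
by move=> p0 q0; rewrite !entry_subZ p0 q0 !mulr0 subr0.
Qed.

End Entries.

Section BlockToeplitz.
Variables (C : numClosedFieldType) (n1 n2 : nat).
Local Notation N := (n1 * n2)%N.
Local Notation U := (shiftU C N).
Variable R : 'M[C]_N.
Hypothesis R_toep : block_toeplitz n1 n2 R.

Lemma mx_input_shift i j m : (i + n1 * m < N)%N -> (n1 * m <= j < N)%N ->
  mx_input R (i + n1 * m) j = mx_input R i (j - n1 * m).
Proof.
move=> hi /andP[hj hjN]; have n1_gt0 : (0 < n1)%N by case: n1 hjN.
have hi' : (i < N)%N by lia.
have hj' : (j - n1 * m < N)%N by lia.
rewrite (mx_input_ord R (Ordinal hi) (Ordinal hjN)) (mx_input_ord R (Ordinal hi') (Ordinal hj')).
have ej : j = (j - n1 * m + n1 * m)%N by rewrite subnK.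
apply: R_toep => /=; first by rewrite addnC mulnC modnMDl.
  by rewrite {1}ej addnC mulnC modnMDl.
by rewrite {1}ej ![(_ + _ * m)%N]addnC mulnC !divnMDl //; lia.
Qed.

Lemma bil_shiftU_exp x l m : (n1 * m <= l < N)%N ->
  (forall i, (N - n1 * m <= i)%N -> entry x i = 0) ->
  bil (U ^+ (n1 * m) *m x) R (ev C N l) = bil x R (ev C N (l - n1 * m)).
Proof.
move=> /andP[sl lN] x0; set s := (n1 * m)%N in sl x0 *.
have sN : (s <= N)%N by lia.
rewrite !bil_ev //; last by lia.
rewrite -(big_mkord xpredT (fun i => entry (U ^+ s *m x) i * mx_input R i l)).
rewrite -(big_mkord xpredT (fun i => entry x i * mx_input R i (l - s))).
rewrite (big_cat_nat (leq0n s) sN) /=.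
rewrite [X in X + _]big1_seq ?add0r => [|i /andP[_]]; last first.
  rewrite mem_index_iota => /andP[_ i_lt]; rewrite entry_shiftU_exp; last by lia.
  by rewrite leqNgt i_lt mul0r.
rewrite -{1}(add0n s) big_addn [RHS](big_cat_nat (leq0n (N - s))) ?leq_subr //=.
rewrite [X in _ = _ + X]big1_seq ?addr0 => [|i /andP[_]]; last first.
  by rewrite mem_index_iota => /andP[si _]; rewrite x0 ?mul0r.
apply: eq_big_nat => i /andP[_ hi].
by rewrite entry_shiftU_exp ?leq_addl ?addnK ?mx_input_shift //; lia.
Qed.

Lemma grc_shift d k m : (n1 * m <= k)%N -> (k + d < N)%N ->
  let g := grc R d (k - n1 * m) in
  grc R d k = (U ^+ (n1 * m) *m g.1.1.1, U ^+ (n1 * m) *m g.1.1.2, g.1.2, g.2).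
Proof.
set s := (n1 * m)%N; elim: d k => [|d IHd] k sk kdN /=.
  have ev_shift : ev C N k = U ^+ s *m ev C N (k - s).
    apply: entryP => i hi; rewrite entry_shiftU_exp // !entry_ev //; last by lia.
    case: leqP => [si|i_lt]; first by congr (_%:R); apply/eqP/eqP; lia.
    by rewrite (_ : (i == k) = false) //; apply/negbTE/eqP; lia.
  have kN : (k < N)%N by lia.
  rewrite -ev_shift !bil_ev_ev //; last by lia.
  suff -> : mx_input R k k = mx_input R (k - s) (k - s) by [].
  by rewrite -{1}(subnK sk) mx_input_shift ?subnK //; lia.
rewrite (IHd k) ?(IHd k.+1); try lia.
have -> : (k.+1 - s = (k - s).+1)%N by lia.
have p_supp i : (N - s <= i)%N -> entry (grc R d (k - s)).1.1.1 i = 0.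
  by move=> hi; case: (@grc_support _ _ R d (k - s) i); first lia.
have q_supp i : (N - s <= i)%N -> entry (grc R d (k - s).+1).1.1.2 i = 0.
  by move=> hi; case: (@grc_support _ _ R d (k - s).+1 i); first lia.
move: p_supp q_supp.
case: (grc R d (k - s)) => [[[p q] v] v']; case: (grc R d (k - s).+1) => [[[p2 q2] v2] v2'] /=.
move=> p_supp q_supp; rewrite !bil_shiftU_exp //; try lia.
have -> : (k + d.+1 - s = k - s + d.+1)%N by lia.
by rewrite !mulmxBr !scalemxAr.
Qed.

Lemma grc_sec k l : (k <= l < N)%N ->
  gQ R k l = U ^+ secn k n1 *m gQ R (k %% n1) (l - secn k n1) /\
  gV R k l = gV R (k %% n1) (l - secn k n1).
Proof.
move=> /andP[kl lN]; rewrite /gQ /gV /secn.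
have k_eq := divn_eq k n1.
have -> : (l - n1 * (k %/ n1) - k %% n1 = l - k)%N by lia.
have -> : (k %% n1 = k - n1 * (k %/ n1))%N by lia.
by rewrite (grc_shift (d := (l - k)%N) (k := k) (m := k %/ n1)) //; lia.
Qed.

End BlockToeplitz.

Section Fragments.
Variable T : Type.
Implicit Types (P F G : seq T) (Fs : seq (seq T)).

Definition frag_at P b F := take (size F) (drop b P) = F.

Lemma frag_at_cat P b F G :
  frag_at P b (F ++ G) -> frag_at P b F /\ frag_at P (b + size F) G.
Proof.
rewrite /frag_at size_cat => PFG; split.
  by rewrite -(take_takel _ (leq_addr (size G) _)) PFG take_size_cat.
by rewrite addnC -drop_drop take_drop addnC PFG drop_size_cat.
Qed.

Lemma frag_at_catl P F : frag_at (F ++ P) 0 F.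
Proof. by rewrite /frag_at drop0 take_size_cat. Qed.

Lemma frag_at_catr P G b F : frag_at P b F -> frag_at (G ++ P) (size G + b) F.
Proof. by rewrite /frag_at addnC -drop_drop drop_size_cat. Qed.

Lemma frag_at_flatten s Fs m : all (fun F => size F == s) Fs -> (m < size Fs)%N ->
  frag_at (flatten Fs) (s * m) (nth [::] Fs m).
Proof.
elim: Fs m => [|F Fs IHFs] [|m] //= /andP[/eqP sF sFs] mFs.
  by rewrite muln0; apply: frag_at_catl.
by rewrite mulnS -{1}sF; apply/frag_at_catr/IHFs.
Qed.

Lemma frag_at_nth x0 P b F r : frag_at P b F -> (r < size F)%N ->
  (b + r < size P)%N /\ nth x0 P (b + r) = nth x0 F r.
Proof.
move=> PF rF; have := congr1 (fun s => nth x0 s r) PF.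
rewrite nth_take // nth_drop => ->; split=> //.
by move/(congr1 size): PF; rewrite size_take size_drop; case: ltnP; lia.
Qed.

End Fragments.

Section StraightLine.
Variables (C : numClosedFieldType) (inp : nat -> nat -> C).
Implicit Types (P F : seq (instr C)) (ins : instr C).

Definition eval_instr (val : nat -> C) ins : C :=
  match ins with
  | IIn i j => inp i j
  | ICst c => c
  | IAdd x y => val x + val y
  | ISub x y => val x - val y
  | IMul x y => val x * val y
  | IDiv x y => val x / val y
  end.

Definition args ins : seq nat :=
  match ins with
  | IIn _ _ | ICst _ => [::]
  | IAdd x y | ISub x y | IMul x y | IDiv x y => [:: x; y]
  end.

Lemma eq_in_eval_instr f g ins :
  {in args ins, f =1 g} -> eval_instr f ins = eval_instr g ins.
Proof.
by case: ins => //= x y fg; rewrite !fg // !inE eqxx ?orbT.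
Qed.

Lemma run_rcons P ins :
  run inp (rcons P ins) = rcons (run inp P) (eval_instr (nth 0 (run inp P)) ins).
Proof. by rewrite /run -cats1 foldl_cat; case: ins. Qed.

Lemma size_run P : size (run inp P) = size P.
Proof. by elim/last_ind: P => // P ins IHP; rewrite run_rcons !size_rcons IHP. Qed.

Lemma run_cat_prefix P Q : take (size P) (run inp (P ++ Q)) = run inp P.
Proof.
elim/last_ind: Q => [|Q ins IHQ]; first by rewrite cats0 -(size_run P) take_size.
rewrite -rcons_cat run_rcons -cats1 takel_cat // size_run size_cat.
exact: leq_addr.
Qed.

Lemma nth_run P j : (j < size P)%N ->
  all (fun x => x < j)%N (args (nth (ICst 0) P j)) ->
  nth 0 (run inp P) j = eval_instr (nth 0 (run inp P)) (nth (ICst 0) P j).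
Proof.
move=> jP args_lt; set ins := nth (ICst 0) P j; set Q := rcons (take j P) ins.
have P_eq : P = Q ++ drop j.+1 P by rewrite /Q -cats1 -catA /= -drop_nth // cat_take_drop.
have size_Q : size Q = j.+1 by rewrite size_rcons size_take jP.
have run_Q x : (x <= j)%N -> nth 0 (run inp P) x = nth 0 (run inp Q) x.
  by move=> xj; rewrite P_eq -(run_cat_prefix Q (drop j.+1 P)) nth_take // size_Q.
have run_take x : (x < j)%N -> nth 0 (run inp Q) x = nth 0 (run inp (take j P)) x.
  by move=> xj; rewrite run_rcons nth_rcons size_run size_take jP xj.
rewrite run_Q // run_rcons nth_rcons size_run size_take jP ltnn eqxx.
apply: eq_in_eval_instr => x /(allP args_lt) xj.
by rewrite run_Q ?run_take // ltnW.
Qed.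

Section Evaluation.
Variable P : seq (instr C).
Local Notation out := (nth 0 (run inp P)).

Lemma frag_eval b F r : frag_at P b F -> (r < size F)%N ->
  all (fun x => x < b + r)%N (args (nth (ICst 0) F r)) ->
  out (b + r) = eval_instr out (nth (ICst 0) F r).
Proof.
move=> PF rF; have [bP PF_r] := frag_at_nth (ICst 0) PF rF.
by move=> args_lt; rewrite -PF_r nth_run // PF_r.
Qed.

Lemma frag_eval1 b ins j : frag_at P b [:: ins] -> j = b ->
  all (fun x => x < j)%N (args ins) -> out j = eval_instr out ins.
Proof. by move=> Pins -> args_lt; rewrite -[b]addn0 (frag_eval Pins) ?addn0. Qed.

Lemma frag_eval_mkseq b m f i j : frag_at P b (mkseq f m) -> (i < m)%N -> j = (b + i)%N ->
  all (fun x => x < j)%N (args (f i)) -> out j = eval_instr out (f i).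
Proof.
move=> Pf im ->; rewrite -(nth_mkseq (ICst 0) f im) => args_lt.
by rewrite (frag_eval Pf) ?size_mkseq.
Qed.

End Evaluation.
End StraightLine.

Arguments frag_eval1 {C inp P b ins j}.
Arguments frag_eval_mkseq {C inp P b m f i j}.

Section RecurrenceFragments.
Variables (C : numClosedFieldType) (inp : nat -> nat -> C) (N : nat).

Definition dot_frag b (x : nat -> nat) l : seq (instr C) :=
  mkseq (fun i => IIn C i l) N ++ mkseq (fun i => IMul C (x i) (b + i)) N ++
  [:: ICst 0] ++ mkseq (fun i => IAdd C (b + 2 * N + i) (b + N + i)) N.

Lemma size_dot_frag b x l : size (dot_frag b x l) = (3 * N + 1)%N.
Proof. rewrite !size_cat !size_mkseq /=; lia. Qed.

Variable P : seq (instr C).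
Local Notation out := (nth 0 (run inp P)).

Lemma dot_frag_eval c b x l : c = b -> frag_at P c (dot_frag b x l) ->
  (forall i, (i < N)%N -> (x i < b)%N) ->
  out (b + 3 * N) = \sum_(i < N) out (x i) * inp i l.
Proof.
move=> -> /frag_at_cat[Fin /frag_at_cat[Fmul /frag_at_cat[F0 Fadd]]] x_lt.
rewrite !size_mkseq /= in Fmul F0 Fadd.
have in_i i : (i < N)%N -> out (b + i) = inp i l.
  by move=> iN; rewrite (frag_eval_mkseq Fin iN).
have mul_i i : (i < N)%N -> out (b + N + i) = out (x i) * inp i l.
  move=> iN; have xb := x_lt i iN.
  by rewrite (frag_eval_mkseq Fmul iN) //= ?in_i //; lia.
have acc_i i : (i <= N)%N -> out (b + 2 * N + i) = \sum_(j < i) out (x j) * inp j l.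
  elim: i => [|i IHi] iN.
    by rewrite big_ord0 (frag_eval1 F0) //; lia.
  rewrite big_ord_recr -IHi ?(ltnW iN) // -mul_i //.
  by rewrite (frag_eval_mkseq Fadd iN) //=; lia.
by rewrite -acc_i //; congr (out _); lia.
Qed.

Definition coef_frag b (p q : nat -> nat) l k v v' : seq (instr C) :=
  dot_frag b p l ++ [:: IDiv C (b + 3 * N) v] ++
  dot_frag (b + 3 * N + 2) q k ++ [:: IDiv C (b + 6 * N + 2) v'].

Lemma size_coef_frag b p q l k v v' : size (coef_frag b p q l k v v') = (6 * N + 4)%N.
Proof. rewrite /coef_frag /dot_frag !size_cat !size_mkseq /=; lia. Qed.

Lemma coef_frag_eval b p q l k v v' : frag_at P b (coef_frag b p q l k v v') ->
  (forall i, (i < N)%N -> (p i < b)%N /\ (q i < b)%N) -> (v < b)%N -> (v' < b)%N ->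
  out (b + 3 * N + 1) = (\sum_(i < N) out (p i) * inp i l) / out v /\
  out (b + 6 * N + 3) = (\sum_(i < N) out (q i) * inp i k) / out v'.
Proof.
move=> /frag_at_cat[Fdot /frag_at_cat[Fa /frag_at_cat[Fdot' Fa']]] pq_lt v_lt v'_lt.
rewrite !size_dot_frag /= in Fa Fdot' Fa'.
have dot_p : out (b + 3 * N) = \sum_(i < N) out (p i) * inp i l.
  by apply: (dot_frag_eval (erefl b) Fdot) => i /pq_lt[].
have dot_q : out (b + 6 * N + 2) = \sum_(i < N) out (q i) * inp i k.
  rewrite (_ : b + 6 * N + 2 = b + 3 * N + 2 + 3 * N)%N; last by lia.
  by apply: (dot_frag_eval _ Fdot'); [lia | move=> i /pq_lt[_]; lia].
split; first by rewrite (frag_eval1 Fa) /= ?dot_p //; lia.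
by rewrite (frag_eval1 Fa') /= ?dot_q //; lia.
Qed.

Definition update_frag b (p q : nat -> nat) v v' a a' : seq (instr C) :=
  mkseq (fun i => IMul C a (q i)) N ++ mkseq (fun i => IMul C a' (p i)) N ++
  [:: IMul C a a'] ++ [:: ISub C 1%N (b + 2 * N)] ++
  mkseq (fun i => ISub C (p i) (b + i)) N ++ mkseq (fun i => ISub C (q i) (b + N + i)) N ++
  [:: IMul C v (b + 2 * N + 1)] ++ [:: IMul C v' (b + 2 * N + 1)].

Lemma size_update_frag b p q v v' a a' : size (update_frag b p q v v' a a') = (4 * N + 4)%N.
Proof. rewrite !size_cat !size_mkseq /=; lia. Qed.

Lemma update_frag_eval b p q v v' a a' : frag_at P b (update_frag b p q v v' a a') ->
  (forall i, (i < N)%N -> (p i < b)%N /\ (q i < b)%N) ->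
  (v < b)%N -> (v' < b)%N -> (a < b)%N -> (a' < b)%N -> (1 < b)%N -> out 1%N = 1 ->
  [/\ forall i, (i < N)%N ->
        out (b + 2 * N + 2 + i) = out (p i) - out a * out (q i) /\
        out (b + 3 * N + 2 + i) = out (q i) - out a' * out (p i),
      out (b + 4 * N + 2) = out v * (1 - out a * out a') &
      out (b + 4 * N + 3) = out v' * (1 - out a * out a')].
Proof.
move=> /frag_at_cat[Faq /frag_at_cat[Fap /frag_at_cat[Faa /frag_at_cat[Fs]]]].
move=> /frag_at_cat[Fp /frag_at_cat[Fq /frag_at_cat[Fv Fv']]].
move=> pq_lt v_lt v'_lt a_lt a'_lt one_lt one.
rewrite !size_mkseq /= in Fap Faa Fs Fp Fq Fv Fv'.
have aq i : (i < N)%N -> out (b + i) = out a * out (q i).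
  by move=> iN; have [_ ?] := pq_lt i iN; rewrite (frag_eval_mkseq Faq iN) //=; lia.
have ap i : (i < N)%N -> out (b + N + i) = out a' * out (p i).
  by move=> iN; have [? _] := pq_lt i iN; rewrite (frag_eval_mkseq Fap iN) //=; lia.
have aa : out (b + 2 * N) = out a * out a' by rewrite (frag_eval1 Faa) //=; lia.
have s : out (b + 2 * N + 1) = 1 - out a * out a'.
  by rewrite (frag_eval1 Fs) /= ?one ?aa //; lia.
split.
- move=> i iN; have [? ?] := pq_lt i iN.
  split; first by rewrite (frag_eval_mkseq Fp iN) /= ?aq //; lia.
  by rewrite (frag_eval_mkseq Fq iN) /= ?ap //; lia.
- by rewrite (frag_eval1 Fv) /= ?s //; lia.
- by rewrite (frag_eval1 Fv') /= ?s //; lia.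
Qed.

End RecurrenceFragments.

Arguments coef_frag_eval {C inp N P b p q l k v v'}.
Arguments update_frag_eval {C inp N P b p q v v' a a'}.

Section Program.
Variables (C : numClosedFieldType) (n1 N : nat).

(* Block [(d, k)] computes p, q, v, v' (and a, a' when d > 0) for the pair
   (k, k + d).  Blocks are laid out by increasing d, so the operands of a
   block all lie in earlier blocks; addresses 0 and 1 hold the constants. *)
Definition block_size := (10 * N + 8)%N.
Definition block_base d k := (2 + block_size * (d * n1 + k))%N.

Definition addr_a d k := (block_base d k + 3 * N + 1)%N.
Definition addr_a' d k := (block_base d k + 6 * N + 3)%N.
Definition addr_p d k i := (block_base d k + 8 * N + 6 + i)%N.
Definition addr_q d k i := (block_base d k + 9 * N + 6 + i)%N.
Definition addr_v d k := (block_base d k + 10 * N + 6)%N.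
Definition addr_v' d k := (block_base d k + 10 * N + 7)%N.

(* Row n1 is not stored: q_{n1,l} = U^{n1} q_{0,l-n1} and v_{n1,l} = v_{0,l-n1}
   by [grc_shift], and address 0 holds 0. *)
Definition addr_q_next d k i :=
  if (k.+1 < n1)%N then addr_q d k.+1 i
  else if (n1 <= i)%N then addr_q d 0 (i - n1) else 0%N.
Definition addr_v_next d k := if (k.+1 < n1)%N then addr_v d k.+1 else addr_v d 0.

(* Padded so that the results sit at the same offsets as in [step_block]. *)
Definition init_block k : seq (instr C) :=
  nseq (8 * N + 6) (ICst 0) ++ mkseq (fun i => ICst (i == k)%:R) N ++
  mkseq (fun i => ICst (i == k)%:R) N ++ [:: IIn C k k] ++ [:: IIn C k k].

Definition step_block d k : seq (instr C) :=
  let b := block_base d.+1 k in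
  let p := addr_p d k in let q := addr_q_next d k in
  let v := addr_v_next d k in let v' := addr_v' d k in
  coef_frag C N b p q (k + d.+1) k v v' ++
  update_frag C N (b + 6 * N + 4) p q v v' (addr_a d.+1 k) (addr_a' d.+1 k).

Definition block d k := if d is d'.+1 then step_block d' k else init_block k.

Definition blocks : seq (seq (instr C)) :=
  mkseq (fun m => block (m %/ n1)%N (m %% n1)%N) (N * n1).

Definition prog : seq (instr C) := [:: ICst 0; ICst 1] ++ flatten blocks.

Lemma size_block d k : size (block d k) = block_size.
Proof.
case: d => [|d] /=; first by rewrite !size_cat !size_mkseq size_nseq /block_size /=; lia.
by rewrite size_cat size_coef_frag size_update_frag /block_size; lia.
Qed.

Lemma size_prog : size prog = (2 + block_size * (N * n1))%N.
Proof.
rewrite size_cat size_flatten.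
have -> : shape blocks = nseq (N * n1) block_size.
  apply: (@eq_from_nth _ 0%N); rewrite ?size_map ?size_iota ?size_nseq // => m lt_m.
  by rewrite (nth_map [::]) ?size_mkseq // nth_mkseq // nth_nseq lt_m size_block.
by rewrite sumn_nseq.
Qed.

Lemma frag_at_prog_block d k : (d < N)%N -> (k < n1)%N ->
  frag_at prog (block_base d k) (block d k).
Proof.
move=> dN kn; have m_lt : (d * n1 + k < N * n1)%N by nia.
have -> : block d k = nth [::] blocks (d * n1 + k).
  by rewrite nth_mkseq // divnMDl ?modnMDl ?divn_small ?modn_small ?addn0 //; lia.
apply: frag_at_catr; apply: frag_at_flatten; last by rewrite size_mkseq.
by rewrite all_map; apply/allP => m _ /=; rewrite size_block.
Qed.

Lemma block_base_lt d k d' k' r : (d * n1 + k < d' * n1 + k')%N -> (r < block_size)%N ->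
  (block_base d k + r < block_base d' k')%N.
Proof.
move=> lt_dk lt_r; rewrite /block_base -addnA ltn_add2l.
apply: (leq_trans (_ : _ < block_size * (d * n1 + k).+1)%N); first by rewrite mulnS; lia.
by rewrite leq_mul2l lt_dk orbT.
Qed.

Lemma addr_lt_block_base d k d' k' i : (d * n1 + k < d' * n1 + k')%N -> (i < N)%N ->
  [/\ (addr_p d k i < block_base d' k')%N, (addr_q d k i < block_base d' k')%N,
      (addr_v d k < block_base d' k')%N & (addr_v' d k < block_base d' k')%N].
Proof.
move=> lt_dk iN; have lt_r r := block_base_lt (r := r) lt_dk.
rewrite /addr_p /addr_q /addr_v /addr_v'; split.
- by have := lt_r (8 * N + 6 + i)%N; rewrite /block_size; lia.
- by have := lt_r (9 * N + 6 + i)%N; rewrite /block_size; lia.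
- by have := lt_r (10 * N + 6)%N; rewrite /block_size; lia.
- by have := lt_r (10 * N + 7)%N; rewrite /block_size; lia.
Qed.

Lemma step_operands_lt d k : (k < n1)%N -> (d.+1 < N)%N ->
  [/\ forall i, (i < N)%N ->
        (addr_p d k i < block_base d.+1 k)%N /\ (addr_q_next d k i < block_base d.+1 k)%N,
      (addr_v_next d k < block_base d.+1 k)%N & (addr_v' d k < block_base d.+1 k)%N].
Proof.
move=> kn dN; have lt_prev k' : (k' < n1)%N -> (d * n1 + k' < d.+1 * n1 + k)%N by lia.
have n1_gt0 : (0 < n1)%N by lia.
have [_ _ _ v'_lt] := addr_lt_block_base (lt_prev k kn) (ltn_trans (ltn0Sn d) dN).
have [_ _ v0_lt _] := addr_lt_block_base (lt_prev 0%N n1_gt0) (ltn_trans (ltn0Sn d) dN).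
split=> // [i iN|]; rewrite /addr_q_next /addr_v_next; case: ifP => [k1n|_].
- by case: (addr_lt_block_base (lt_prev k kn) iN); case: (addr_lt_block_base (lt_prev _ k1n) iN).
- have [p_lt _ _ _] := addr_lt_block_base (lt_prev k kn) iN; split=> //.
  case: ifP => [n1i|_]; last by rewrite /block_base; lia.
  by case: (addr_lt_block_base (lt_prev 0%N n1_gt0) (_ : i - n1 < N)%N); first lia.
- by case: (addr_lt_block_base (lt_prev _ k1n) (ltn_trans (ltn0Sn d) dN)).
- exact: v0_lt.
Qed.

End Program.

Section ProgramEval.
Variables (C : numClosedFieldType) (inp : nat -> nat -> C) (n1 N : nat).
Local Notation P := (prog C n1 N).
Local Notation out := (nth 0 (run inp P)).

Lemma out_consts : out 0%N = 0 /\ out 1%N = 1.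
Proof.
have : frag_at P 0 ([:: ICst 0] ++ [:: ICst 1]) by apply: frag_at_catl.
by case/frag_at_cat => F0 F1; split; [rewrite (frag_eval1 F0) | rewrite (frag_eval1 F1)].
Qed.

Lemma init_block_eval k : (k < n1)%N -> (0 < N)%N ->
  [/\ forall i, (i < N)%N ->
        out (addr_p n1 N 0 k i) = (i == k)%:R /\ out (addr_q n1 N 0 k i) = (i == k)%:R,
      out (addr_v n1 N 0 k) = inp k k & out (addr_v' n1 N 0 k) = inp k k].
Proof.
move=> kn N_gt0; have := frag_at_prog_block C N_gt0 kn.
case/frag_at_cat => _ /frag_at_cat[Fp /frag_at_cat[Fq /frag_at_cat[Fv Fv']]].
rewrite !size_mkseq size_nseq /= in Fp Fq Fv Fv'.
rewrite /addr_p /addr_q /addr_v /addr_v'; split.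
- by move=> i iN; rewrite (frag_eval_mkseq Fp iN) ?(frag_eval_mkseq Fq iN) //; lia.
- by rewrite (frag_eval1 Fv) //; lia.
- by rewrite (frag_eval1 Fv') //; lia.
Qed.

Lemma step_block_eval d k : (k < n1)%N -> (k + d.+1 < N)%N ->
  let p := addr_p n1 N d k in let q := addr_q_next n1 N d k in
  let v := addr_v_next n1 N d k in let v' := addr_v' n1 N d k in
  let a := (\sum_(i < N) out (p i) * inp i (k + d.+1)) / out v in
  let a' := (\sum_(i < N) out (q i) * inp i k) / out v' in
  [/\ out (addr_a n1 N d.+1 k) = a, out (addr_a' n1 N d.+1 k) = a',
      forall i, (i < N)%N ->
        out (addr_p n1 N d.+1 k i) = out (p i) - a * out (q i) /\
        out (addr_q n1 N d.+1 k i) = out (q i) - a' * out (p i),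
      out (addr_v n1 N d.+1 k) = out v * (1 - a * a') &
      out (addr_v' n1 N d.+1 k) = out v' * (1 - a * a')].
Proof.
move=> kn kdN p q v v' a a'; have dN : (d.+1 < N)%N by lia.
set b := block_base n1 N d.+1 k.
have [pq_lt v_lt v'_lt] := step_operands_lt kn dN.
have := frag_at_prog_block C dN kn; rewrite /= /step_block -/b -/p -/q -/v -/v'.
case/frag_at_cat; rewrite size_coef_frag addnA => Fcoef Fupd.
have [a_val a'_val] := coef_frag_eval (inp := inp) Fcoef pq_lt v_lt v'_lt.
have [_ one] := out_consts.
have upd_lt x : (x < b)%N -> (x < b + 6 * N + 4)%N by lia.
have pq_lt' i : (i < N)%N -> (p i < b + 6 * N + 4)%N /\ (q i < b + 6 * N + 4)%N.
  by move=> /pq_lt[? ?]; split; apply: upd_lt.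
have a_lt : (addr_a n1 N d.+1 k < b + 6 * N + 4)%N by rewrite /addr_a -/b; lia.
have a'_lt : (addr_a' n1 N d.+1 k < b + 6 * N + 4)%N by rewrite /addr_a' -/b; lia.
have one_lt : (1 < b + 6 * N + 4)%N by lia.
have [upd_pq upd_v upd_v'] :=
  update_frag_eval (inp := inp) Fupd pq_lt' (upd_lt _ v_lt) (upd_lt _ v'_lt) a_lt a'_lt one_lt one.
have a_addr : out (addr_a n1 N d.+1 k) = a by exact: a_val.
have a'_addr : out (addr_a' n1 N d.+1 k) = a' by exact: a'_val.
rewrite a_addr a'_addr in upd_pq upd_v upd_v'; split=> //.
- move=> i /upd_pq[<- <-].
  by rewrite /addr_p /addr_q -/b; split; congr (out _); lia.
- by rewrite -upd_v /addr_v -/b; congr (out _); lia.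
- by rewrite -upd_v' /addr_v' -/b; congr (out _); lia.
Qed.

End ProgramEval.

Section Correctness.
Variables (C : numClosedFieldType) (n1 n2 : nat).
Local Notation N := (n1 * n2)%N.
Variable R : 'M[C]_N.
Hypothesis R_toep : block_toeplitz n1 n2 R.
Local Notation out := (nth 0 (run (mx_input R) (prog C n1 N))).

Definition block_ok d k :=
  [/\ forall i, (i < N)%N ->
        out (addr_p n1 N d k i) = entry (grc R d k).1.1.1 i /\
        out (addr_q n1 N d k i) = entry (grc R d k).1.1.2 i,
      out (addr_v n1 N d k) = (grc R d k).1.2,
      out (addr_v' n1 N d k) = (grc R d k).2 &
      (0 < d)%N -> out (addr_a n1 N d k) = (grca R d k).1 /\
                   out (addr_a' n1 N d k) = (grca R d k).2].

Lemma init_block_ok k : (k < n1)%N -> (k < N)%N -> block_ok 0 k.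
Proof.
move=> kn kN; have [pq v v'] := init_block_eval (mx_input R) kn (leq_ltn_trans (leq0n k) kN).
split=> //=; rewrite ?bil_ev_ev //.
by move=> i iN; rewrite !entry_ev //; exact: pq.
Qed.

Lemma next_row_ok d k : (k < n1)%N -> (k + d.+1 < N)%N ->
  block_ok d 0 -> ((k.+1 < n1)%N -> block_ok d k.+1) ->
  (forall i, (i < N)%N -> out (addr_q_next n1 N d k i) = entry (grc R d k.+1).1.1.2 i) /\
  out (addr_v_next n1 N d k) = (grc R d k.+1).1.2.
Proof.
move=> kn kdN [pq0 v0 _ _] ok_next; rewrite /addr_q_next /addr_v_next.
case: ifP => [k1n|k1n]; first by case: (ok_next k1n) => pq v _ _; split=> // i /pq[].
rewrite (grc_shift R_toep (d := d) (k := k.+1) (m := 1)) /=; [|lia|lia].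
rewrite (_ : (k.+1 - n1 * 1)%N = 0%N); last by lia.
split=> // i iN; rewrite entry_shiftU_exp // muln1.
case: ifP => [n1i|_]; last by case: (@out_consts C (mx_input R) n1 N).
by have [_ ->] := pq0 (i - n1)%N ltac:(lia).
Qed.

Lemma step_block_ok d k : (k < n1)%N -> (k + d.+1 < N)%N ->
  block_ok d k -> block_ok d 0 -> ((k.+1 < n1)%N -> block_ok d k.+1) -> block_ok d.+1 k.
Proof.
move=> kn kdN [pq_dk _ v'_dk _] ok_d0 ok_next.
have [q_next v_next] := next_row_ok kn kdN ok_d0 ok_next.
have p_dk i : (i < N)%N -> out (addr_p n1 N d k i) = entry (grc R d k).1.1.1 i.
  by move=> /pq_dk[].
have := step_block_eval (mx_input R) kn kdN; rewrite /block_ok /=.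
move: p_dk q_next v_next v'_dk.
case: (grc R d k) => [[[p1 q1] v1] v1']; case: (grc R d k.+1) => [[[p2 q2] v2] v2'] /=.
move=> p1_val q2_val -> ->.
have -> : \sum_(i < N) out (addr_p n1 N d k i) * mx_input R i (k + d.+1) =
          bil p1 R (ev C N (k + d.+1)).
  by rewrite bil_ev; [apply: eq_bigr => i _; congr (_ * _); apply: p1_val | lia].
have -> : \sum_(i < N) out (addr_q_next n1 N d k i) * mx_input R i k = bil q2 R (ev C N k).
  by rewrite bil_ev; [apply: eq_bigr => i _; congr (_ * _); apply: q2_val | lia].
move=> [-> -> pq -> ->]; split=> // i iN; have [-> ->] := pq i iN.
by rewrite !entry_subZ; split; congr (_ - _ * _); first [exact: p1_val | exact: q2_val].
Qed.

Lemma blocks_ok d k : (k < n1)%N -> (k + d < N)%N -> block_ok d k.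
Proof.
elim: d k => [|d IHd] k kn kdN; first by apply: init_block_ok; lia.
apply: step_block_ok => //; last move=> k1n; apply: IHd; lia.
Qed.

End Correctness.

Theorem theorem2 :
  exists K : nat,
  forall (C : numClosedFieldType) (n1 n2 : nat), (0 < n1)%N -> (0 < n2)%N ->
  exists (P : seq (instr C))
         (pa pa' pv pv' : nat -> nat -> nat)
         (pp pq : nat -> nat -> 'I_(n1 * n2) -> nat),
    (size P <= K * n1 ^ 3 * n2 ^ 2)%N /\
    forall R : 'M[C]_(n1 * n2),
      is_hermitian R -> is_posdef R -> block_toeplitz n1 n2 R ->
      let out := run (mx_input R) P in
      (forall k l : nat, (k < n1)%N -> (k <= l < n1 * n2)%N ->
         [/\ (k < l)%N -> nth 0 out (pa k l) = gA R k l,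
             (k < l)%N -> nth 0 out (pa' k l) = gA' R k l,
             nth 0 out (pv k l) = gV R k l,
             nth 0 out (pv' k l) = gV' R k l &
             forall i, nth 0 out (pp k l i) = gP R k l i ord0 /\
                       nth 0 out (pq k l i) = gQ R k l i ord0]) /\
      (forall k l : nat, (k <= l < n1 * n2)%N ->
         gQ R k l = shiftU C (n1 * n2) ^+ secn k n1 *m gQ R (k %% n1) (l - secn k n1) /\
         gV R k l = gV R (k %% n1) (l - secn k n1)).
Proof.
exists 20%N => C n1 n2 n1_gt0 n2_gt0; pose N := (n1 * n2)%N.
exists (prog C n1 N),
  (fun k l => addr_a n1 N (l - k) k), (fun k l => addr_a' n1 N (l - k) k),
  (fun k l => addr_v n1 N (l - k) k), (fun k l => addr_v' n1 N (l - k) k),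
  (fun k l i => addr_p n1 N (l - k) k i), (fun k l i => addr_q n1 N (l - k) k i).
split.
  have N_gt0 : (0 < N)%N by rewrite muln_gt0 n1_gt0.
  rewrite size_prog /block_size (_ : 20 * n1 ^ 3 * n2 ^ 2 = 20 * (N * N * n1))%N; last first.
    by rewrite /N; ring.
  nia.
(* The program replays the recurrence literally, junk divisions included, so
   the hypotheses that guarantee non-zero pivots are not needed. *)
move=> R _ _ R_toep; split; last by move=> k l; apply: grc_sec.
move=> k l kn /andP[kl lN].
have kdN : (k + (l - k) < N)%N by rewrite subnKC.
have [pq v v'] := blocks_ok R_toep kn kdN; rewrite subn_gt0 => a.
split=> // [/a[] // | /a[] // | i].
by rewrite -!entry_ord; apply: pq.
Qed.
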